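(* Let $m,n\geq 0$ be integers. Then \[ \sum_{k=1}^{n}\frac{(-1)^k q^{\binom{k+1}{2}}}{(q;q)_k (q;q)_{n-k}(q^k;q)_{m+1}} -\sum_{k=1}^{m}\frac{(-1)^k q^{\binom{k+1}{2}}}{(q;q)_k (q;q)_{m-k}(q^k;q)_{n+1}} =\frac{1}{(q;q)_{m}(q;q)_{n}}\left(\sum_{k=1}^m\frac{q^k}{1-q^k}-\sum_{k=1}^n\frac{q^k}{1-q^k}\right). \]
   Context: For $N\geq 0$, $(x;q)_N=(1-x)(1-xq)\cdots(1-xq^{N-1})$ (with $(x;q)_0=1$). The identity is one of rational functions in $q$. *)

From HB Require Import structures.
From mathcomp Require Import all_boot all_order all_algebra.
From mathcomp Require Import fraction.
Set Implicit Arguments. Unset Strict Implicit. Unset Printing Implicit Defensive.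
Import GRing.Theory.
Local Open Scope ring_scope.

Definition qpoch (R : ringType) (x q : R) (N : nat) : R :=
  \prod_(i < N) (1 - x * q ^+ i).

Definition ratfun := {fraction {poly rat}}.
Definition qX : ratfun := tofrac ('X : {poly rat}).

From HB Require Import structures.
From mathcomp Require Import all_boot all_order all_algebra.
From mathcomp Require Import fraction.
From mathcomp Require Import ring.
Set Implicit Arguments. Unset Strict Implicit. Unset Printing Implicit Defensive.
Import GRing.Theory.
Local Open Scope ring_scope.

(* Write [c_n(k) = (-1)^k q^(k+1 choose 2) / ((q;q)_k (q;q)_(n-k))]; these are
   the partial-fraction coefficients [1 / (w;q)_(n+1) = sum_(k<=n) c_n(k) / (1 - w q^k)].
   Taking [w = q^k], the k-th term of the first sum on the left is
   [c_n(k) sum_(i<=m) c_m(i) / (1 - q^(k+i))].  The terms with [i, k >= 1] form a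
   double sum symmetric in [(m, n)], so they cancel against the second sum, and
   the terms [i = 0] leave [(q;q)_m^-1 sum_(k>=1) c_n(k) / (1 - q^k)], which an
   induction on [n] through the q-Pascal recurrence of [c_n] evaluates to
   [-((q;q)_m (q;q)_n)^-1 sum_(k=1..n) q^k / (1 - q^k)]. *)

Lemma qpochS (R : nzRingType) (x q : R) n :
  qpoch x q n.+1 = qpoch x q n * (1 - x * q ^+ n).
Proof. by rewrite /qpoch big_ord_recr. Qed.

Lemma qpochSl (R : nzRingType) (x q : R) n :
  qpoch x q n.+1 = (1 - x) * qpoch (x * q) q n.
Proof.
rewrite /qpoch big_ord_recl expr0 mulr1; congr (_ * _).
by apply: eq_bigr => i _; rewrite exprS mulrA.
Qed.

Section QPartialFractions.

Variables (R : fieldType) (q : R).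
Hypothesis subr1_qpow_neq0 : forall j, (0 < j)%N -> 1 - q ^+ j != 0.

Lemma qpoch_neq0 n : qpoch q q n != 0.
Proof. by apply/prodf_neq0 => i _; rewrite -exprS subr1_qpow_neq0. Qed.

Definition pfcoef n k : R :=
  (-1) ^+ k * q ^+ 'C(k.+1, 2) / (qpoch q q k * qpoch q q (n - k)).

Lemma pfcoef0 n : pfcoef n 0 = (qpoch q q n)^-1.
Proof. by rewrite /pfcoef subn0 /qpoch big_ord0 !mul1r. Qed.

Lemma pfcoefSn m i : (i <= m)%N ->
  pfcoef m.+1 i * (1 - q ^+ (m.+1 - i)) = pfcoef m i.
Proof.
move=> le_im; rewrite /pfcoef subSn // qpochS -exprS.
have := qpoch_neq0 i; have := qpoch_neq0 (m - i).
have := subr1_qpow_neq0 (ltn0Sn (m - i)).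
by move=> *; field; apply/and3P.
Qed.

Lemma pfcoefSS m i :
  pfcoef m.+1 i.+1 * (1 - q ^+ i.+1) = - q ^+ i.+1 * pfcoef m i.
Proof.
rewrite /pfcoef subSS qpochS -exprS binS bin1 exprD exprS.
have := qpoch_neq0 i; have := qpoch_neq0 (m - i).
have := subr1_qpow_neq0 (ltn0Sn i).
by move=> *; field; apply/and3P.
Qed.

(* q-Pascal rule: split [1 - q^(m+1) = (1 - q^(m+1-i)) + q^(m+1-i) (1 - q^i)]. *)
Lemma pfcoef_sumS m (f : nat -> R) :
  (1 - q ^+ m.+1) * \sum_(i < m.+2) pfcoef m.+1 i * f i =
  \sum_(i < m.+1) pfcoef m i * f i
  - q ^+ m.+1 * \sum_(i < m.+1) pfcoef m i * f i.+1.
Proof.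
have split_i (i : 'I_m.+2) : 1 - q ^+ m.+1 =
    (1 - q ^+ (m.+1 - i)) + q ^+ (m.+1 - i) * (1 - q ^+ i).
  by rewrite mulrBr mulr1 -exprD subnK ?addrA ?subrK // -ltnS.
rewrite mulr_sumr.
under eq_bigr => i _ do rewrite (split_i i) mulrDl.
rewrite big_split [X in X + _ = _]big_ord_recr [X in _ + X = _]big_ord_recl /=.
rewrite subnn subn0 !expr0 !subrr mulr0 !mul0r addr0 add0r mulr_sumr -sumrN.
congr (_ + _); apply: eq_bigr => i _.
  by rewrite mulrCA mulrA pfcoefSn // -ltnS.
have Em : m.+1 = (m - i + i.+1)%N by rewrite addnS subnK // -ltnS.
rewrite /bump add1n subSS [in q ^+ m.+1]Em exprD.
transitivity (q ^+ (m - i) * (pfcoef m.+1 i.+1 * (1 - q ^+ i.+1)) * f i.+1).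
  by ring.
by rewrite pfcoefSS; ring.
Qed.

Lemma qpoch_partial_fractions m (w : R) :
  (forall i, (i <= m)%N -> 1 - w * q ^+ i != 0) ->
  \sum_(i < m.+1) pfcoef m i / (1 - w * q ^+ i) = (qpoch w q m.+1)^-1.
Proof.
elim: m w => [|m IHm] w w_ok.
  by rewrite big_ord1 pfcoef0 /qpoch !big_ord1 big_ord0 invr1 mul1r.
have qm_neq0 := subr1_qpow_neq0 (ltn0Sn m).
apply: (mulfI qm_neq0); rewrite (pfcoef_sumS m (fun i => (1 - w * q ^+ i)^-1)).
rewrite IHm => [|i le_im]; last exact/w_ok/leqW.
under eq_bigr => i _ do rewrite exprS mulrA.
rewrite IHm => [|i le_im]; last by rewrite -mulrA -exprS w_ok.
have w_neq0 : 1 - w != 0 by have := w_ok 0%N isT; rewrite mulr1.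
have wm_neq0 : 1 - w * q ^+ m.+1 != 0 by apply: w_ok.
have Pwq_neq0 : qpoch (w * q) q m != 0.
  by apply/prodf_neq0 => i _; rewrite -mulrA -exprS w_ok // ltnS ltnW.
rewrite (qpochSl w) qpochS qpochSl (qpochS (w * q)) -mulrA -exprS.
by field; apply/and3P.
Qed.

Lemma pfcoef_sum_div n :
  \sum_(1 <= k < n.+1) pfcoef n k / (1 - q ^+ k) =
  - (\sum_(1 <= k < n.+1) q ^+ k / (1 - q ^+ k)) / qpoch q q n.
Proof.
(* The added term [k = 0] is [pfcoef m 0 / (1 - q^0) = pfcoef m 0 / 0 = 0]. *)
have sum_from0 m : \sum_(1 <= k < m.+1) pfcoef m k / (1 - q ^+ k) =
    \sum_(k < m.+1) pfcoef m k / (1 - q ^+ k).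
  rewrite -(big_mkord xpredT (fun k => pfcoef m k / (1 - q ^+ k))).
  by rewrite big_ltn // subrr invr0 mulr0 add0r.
elim: n => [|n IHn]; first by rewrite !big_geq // oppr0 mul0r.
have qn_neq0 := subr1_qpow_neq0 (ltn0Sn n).
apply: (mulfI qn_neq0).
rewrite sum_from0 (pfcoef_sumS n (fun k => (1 - q ^+ k)^-1)) -sum_from0 IHn.
under [X in _ - _ * X]eq_bigr => k _ do rewrite exprS.
rewrite qpoch_partial_fractions => [|i _]; last by rewrite -exprS subr1_qpow_neq0.
rewrite [in RHS]big_nat_recr //= !qpochS -exprS.
by have := qpoch_neq0 n; move=> *; field; apply/andP.
Qed.

Lemma pfcoef_expand n m :
  \sum_(1 <= k < n.+1)
      ((-1) ^+ k * q ^+ 'C(k.+1, 2) /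
        (qpoch q q k * qpoch q q (n - k) * qpoch (q ^+ k) q m.+1)) =
  (qpoch q q m)^-1 * \sum_(1 <= k < n.+1) pfcoef n k / (1 - q ^+ k) +
  \sum_(1 <= k < n.+1) \sum_(1 <= i < m.+1)
      pfcoef n k * pfcoef m i / (1 - q ^+ (k + i)).
Proof.
rewrite mulr_sumr -big_split /=; apply: eq_big_nat => k /andP[k_gt0 _].
rewrite invfM mulrA -/(pfcoef n k) -qpoch_partial_fractions => [|i _]; last first.
  by rewrite -exprD subr1_qpow_neq0 ?addn_gt0 ?k_gt0.
rewrite big_ord_recl pfcoef0 expr0 mulr1 mulrDr big_add1 big_mkord mulr_sumr.
congr (_ + _); first exact: mulrCA.
by apply: eq_bigr => i _; rewrite exprD mulrA.
Qed.

Lemma qpoch_sum_identity m n :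
  \sum_(1 <= k < n.+1)
      ((-1) ^+ k * q ^+ 'C(k.+1, 2) /
        (qpoch q q k * qpoch q q (n - k) * qpoch (q ^+ k) q m.+1))
  - \sum_(1 <= k < m.+1)
      ((-1) ^+ k * q ^+ 'C(k.+1, 2) /
        (qpoch q q k * qpoch q q (m - k) * qpoch (q ^+ k) q n.+1))
  = (qpoch q q m * qpoch q q n)^-1 *
    (\sum_(1 <= k < m.+1) (q ^+ k / (1 - q ^+ k))
     - \sum_(1 <= k < n.+1) (q ^+ k / (1 - q ^+ k))).
Proof.
rewrite !pfcoef_expand !pfcoef_sum_div.
have -> : \sum_(1 <= k < m.+1) \sum_(1 <= i < n.+1)
      pfcoef m k * pfcoef n i / (1 - q ^+ (k + i)) =
    \sum_(1 <= k < n.+1) \sum_(1 <= i < m.+1)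
      pfcoef n k * pfcoef m i / (1 - q ^+ (k + i)).
  by rewrite exchange_big_nat; apply: eq_bigr => k _; apply: eq_bigr => i _;
    rewrite (mulrC (pfcoef m _)) addnC.
have := qpoch_neq0 m; have := qpoch_neq0 n.
by move=> *; field; apply/andP.
Qed.

End QPartialFractions.

Lemma subr1_qXpow_neq0 j : (0 < j)%N -> 1 - qX ^+ j != 0.
Proof.
move=> j_gt0; rewrite /qX -tofracXn -tofrac1 -tofracB tofrac_eq0 subr_eq0.
apply/eqP => /(congr1 (fun p : {poly rat} => size p)).
by rewrite size_poly1 size_polyXn => -[j0]; rewrite -j0 in j_gt0.
Qed.

Theorem corollary6p3 (m n : nat) :
  let q := qX in
  \sum_(1 <= k < n.+1)
      ((-1) ^+ k * q ^+ 'C(k.+1, 2) /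
        (qpoch q q k * qpoch q q (n - k) * qpoch (q ^+ k) q m.+1))
  - \sum_(1 <= k < m.+1)
      ((-1) ^+ k * q ^+ 'C(k.+1, 2) /
        (qpoch q q k * qpoch q q (m - k) * qpoch (q ^+ k) q n.+1))
  = (qpoch q q m * qpoch q q n)^-1 *
    (\sum_(1 <= k < m.+1) (q ^+ k / (1 - q ^+ k))
     - \sum_(1 <= k < n.+1) (q ^+ k / (1 - q ^+ k))).
Proof. exact: (qpoch_sum_identity subr1_qXpow_neq0). Qed.
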